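(* Let $M$ be a unit speed curve $\gamma: I\to\mathbb{R}^3$ with arc-length parameter $s$, curvature $\kappa(s) \neq 0$ and torsion $\tau(s)$, and put $\varphi(s) = \int_0^s \tau(t)\,dt + \varphi_0$ for a constant $\varphi_0$. Let $K$ be a curve $\beta$, parametrized by the same arc-length parameter $s$, with $\beta''(s) = \overline{\kappa}(s)\gamma'(s)$, whose curvature and torsion are $$\overline{\kappa}(s) = \kappa(s)\cos\varphi(s), \qquad \overline{\tau}(s) = \kappa(s)\sin\varphi(s).$$ Let $u,w$ be functions on $I$, not simultaneously zero, and let $\lambda$ be a nonzero real constant. Then the curvatures of $K$ satisfy $u\overline{\kappa} - w\overline{\tau} = \lambda(\overline{\kappa}^2+\overline{\tau}^2)$ (the $V$-Mannheim condition for $K$) if and only if $$\kappa(s) = F(s)\cos\big(\varphi(s)+\phi(s)\big),$$ where $F(s) = \frac{\sqrt{u^2+w^2}}{\lambda}$, $\cos\phi(s) = \frac{u}{\sqrt{u^2+w^2}}$ and $\sin\phi(s) = \frac{w}{\sqrt{u^2+w^2}}$.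
   Context: For a unit vector field $V = uT+vN+wB$ along a curve with curvature $\kappa$ and torsion $\tau$, the paper characterizes $V$-Mannheim curves by the relation $u\kappa - w\tau = \lambda(\kappa^2+\tau^2)$; here this relation is imposed on the curvatures $\overline{\kappa},\overline{\tau}$ of $K$. *)

From Stdlib Require Import Reals Lra.
From Coquelicot Require Import Coquelicot.
Open Scope R_scope.

Definition phi_of (tau : R -> R) (phi0 : R) (s : R) : R := RInt tau 0 s + phi0.

Definition kbar (kappa tau : R -> R) (phi0 : R) (s : R) : R :=
  kappa s * cos (phi_of tau phi0 s).
Definition tbar (kappa tau : R -> R) (phi0 : R) (s : R) : R :=
  kappa s * sin (phi_of tau phi0 s).

Definition VMannheim_cond (u w : R -> R) (lam : R) (k t : R -> R) (s : R) : Prop :=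
  u s * k s - w s * t s = lam * (k s ^ 2 + t s ^ 2).

Definition Ffun (u w : R -> R) (lam : R) (s : R) : R :=
  sqrt (u s ^ 2 + w s ^ 2) / lam.

(* Since kbar^2 + tbar^2 = kappa^2, the V-Mannheim condition for K is kappa
   times (u cos phi - w sin phi) = lambda kappa^2; cancelling kappa <> 0 it reads
   u cos phi - w sin phi = lambda kappa, and by the addition formula the left side
   is sqrt (u^2 + w^2) cos (phi + phis). *)
From Stdlib Require Import Reals Lra.
From Coquelicot Require Import Coquelicot.
Open Scope R_scope.

Lemma rotated_condition_iff (k c sn a b lam : R) :
  k <> 0 -> c ^ 2 + sn ^ 2 = 1 ->
  a * (k * c) - b * (k * sn) = lam * ((k * c) ^ 2 + (k * sn) ^ 2) <->
  a * c - b * sn = lam * k.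
Proof.
  intros Hk Hcs.
  replace (a * (k * c) - b * (k * sn)) with (k * (a * c - b * sn)) by ring.
  replace (lam * ((k * c) ^ 2 + (k * sn) ^ 2)) with (k * (lam * k))
    by (replace ((k * c) ^ 2 + (k * sn) ^ 2) with (k ^ 2 * (c ^ 2 + sn ^ 2))
          by ring; rewrite Hcs; ring).
  split; intro H.
  - exact (Rmult_eq_reg_l k _ _ H Hk).
  - now rewrite H.
Qed.

Lemma polar_cos_plus (a b r p x : R) :
  r <> 0 -> cos p = a / r -> sin p = b / r ->
  a * cos x - b * sin x = r * cos (x + p).
Proof.
  intros Hr Hc Hs.
  rewrite cos_plus, Hc, Hs.
  field; exact Hr.
Qed.

Lemma sqrt_sum_sq_neq0 (a b : R) : a ^ 2 + b ^ 2 <> 0 -> sqrt (a ^ 2 + b ^ 2) <> 0.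
Proof.
  intros Hab H0.
  apply Hab, sqrt_eq_0; [nra | exact H0].
Qed.

Lemma VMannheim_cond_iff_at (kappa tau : R -> R) (phi0 : R) (u w : R -> R)
    (lam p s : R) :
  kappa s <> 0 -> u s ^ 2 + w s ^ 2 <> 0 -> lam <> 0 ->
  cos p = u s / sqrt (u s ^ 2 + w s ^ 2) ->
  sin p = w s / sqrt (u s ^ 2 + w s ^ 2) ->
  VMannheim_cond u w lam (kbar kappa tau phi0) (tbar kappa tau phi0) s <->
  kappa s = Ffun u w lam s * cos (phi_of tau phi0 s + p).
Proof.
  intros Hk Huw Hlam Hc Hs.
  set (phi := phi_of tau phi0 s).
  set (r := sqrt (u s ^ 2 + w s ^ 2)).
  assert (Hr : r <> 0) by now apply sqrt_sum_sq_neq0.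
  assert (Hunit : cos phi ^ 2 + sin phi ^ 2 = 1)
    by (rewrite <- (sin2_cos2 phi); unfold Rsqr; ring).
  unfold VMannheim_cond, kbar, tbar, Ffun; fold phi r.
  rewrite (rotated_condition_iff _ _ _ _ _ _ Hk Hunit).
  rewrite (polar_cos_plus _ _ _ _ phi Hr Hc Hs).
  split; intro H.
  - apply (Rmult_eq_reg_l lam); [rewrite <- H; field |]; exact Hlam.
  - rewrite H; field; exact Hlam.
Qed.

Theorem mainTheorem4
  (I : R -> Prop) (kappa tau : R -> R) (phi0 : R)
  (u w : R -> R) (lam : R) (phis : R -> R)
  (Hkappa : forall s, I s -> kappa s <> 0)
  (Huw : forall s, I s -> u s ^ 2 + w s ^ 2 <> 0)
  (Hlam : lam <> 0)
  (Hcos : forall s, I s -> cos (phis s) = u s / sqrt (u s ^ 2 + w s ^ 2))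
  (Hsin : forall s, I s -> sin (phis s) = w s / sqrt (u s ^ 2 + w s ^ 2)) :
  (forall s, I s ->
     VMannheim_cond u w lam (kbar kappa tau phi0) (tbar kappa tau phi0) s)
  <->
  (forall s, I s ->
     kappa s = Ffun u w lam s * cos (phi_of tau phi0 s + phis s)).
Proof.
  split; intros H s Hs;
    apply (VMannheim_cond_iff_at kappa tau phi0 u w lam (phis s) s
             (Hkappa s Hs) (Huw s Hs) Hlam (Hcos s Hs) (Hsin s Hs));
    exact (H s Hs).
Qed.
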